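(* Let $q$ be a prime power and $n$ a positive integer. Every sesquilinear form of $\mathbb F_{q^{2n}}/\mathbb F_{q^2}$ can be written as $\sigma_L$ for some $q^2$-linear polynomial $L$ over $\mathbb F_{q^{2n}}$. Moreover, for a $q^2$-linear polynomial $L$ over $\mathbb F_{q^{2n}}$, the following conditions are equivalent: (1) $\sigma_L$ is alternating; (2) $\sigma_L$ is the zero form; (3) $L(x)\equiv 0 \pmod{x^{q^{2n}}-x}$.
   Context: $\mathbb F_{q^{2n}}$ is regarded as an $n$-dimensional vector space over $\mathbb F_{q^2}$, and $\pi$ denotes the automorphism $x\mapsto x^q$ of $\mathbb F_{q^2}$. A sesquilinear form of $\mathbb F_{q^{2n}}/\mathbb F_{q^2}$ is a map $\sigma:\mathbb F_{q^{2n}}\times\mathbb F_{q^{2n}}\to\mathbb F_{q^2}$ such that for each fixed $v$, $\sigma(\cdot,v)$ is $\mathbb F_{q^2}$-linear and $\sigma(v,\cdot)$ is additive with $\sigma(v,cw)=c^q\sigma(v,w)$ for $c\in\mathbb F_{q^2}$. It is alternating if $\sigma(v,v)=0$ for all $v$. A $q^2$-linear polynomial over $\mathbb F_{q^{2n}}$ is a polynomial $\sum_i a_ix^{q^{2i}}$ with $a_i\in\mathbb F_{q^{2n}}$. $\mathrm{Tr}$ denotes the trace map $\mathbb F_{q^{2n}}\to\mathbb F_{q^2}$, and $\sigma_L(u,v)=\mathrm{Tr}(uL(v^q))$ for $u,v\in\mathbb F_{q^{2n}}$. *)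

From HB Require Import structures.
From mathcomp Require Import all_boot all_order all_algebra all_field.
Set Implicit Arguments. Unset Strict Implicit. Unset Printing Implicit Defensive.
Import GRing.Theory.
Local Open Scope ring_scope.

Definition prime_power (q : nat) : Prop :=
  exists p k : nat, [/\ prime p, (0 < k)%N & q = (p ^ k)%N].

Definition Fq2 (F : finFieldType) (q : nat) : pred F :=
  [pred x : F | x ^+ (q ^ 2) == x].

Definition Tr (F : finFieldType) (q n : nat) (x : F) : F :=
  \sum_(i < n) x ^+ (q ^ (2 * i)).

Definition sesquilinear (F : finFieldType) (q : nat) (s : F -> F -> F) : Prop :=
  [/\ (forall u v, s u v \in Fq2 q),
      (forall c u u' v, c \in Fq2 q -> s (c * u + u') v = c * s u v + s u' v),
      (forall v w w', s v (w + w') = s v w + s v w')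
    & (forall c v w, c \in Fq2 q -> s v (c * w) = c ^+ q * s v w)].

Definition alternating (F : finFieldType) (s : F -> F -> F) : Prop :=
  forall v, s v v = 0.

Definition qlin_poly (F : finFieldType) (q : nat) (a : seq F) : {poly F} :=
  \sum_(i < size a) a`_i *: 'X^(q ^ (2 * i)).

Definition sigmaL (F : finFieldType) (q n : nat) (a : seq F) (u v : F) : F :=
  Tr q n (u * (qlin_poly q a).[v ^+ q]).

From HB Require Import structures.
From mathcomp Require Import all_boot all_order all_algebra all_field.
Set Implicit Arguments. Unset Strict Implicit. Unset Printing Implicit Defensive.
Import GRing.Theory.
Local Open Scope ring_scope.

(* The trace pairing (u, w) |-> Tr(u w) is nondegenerate and x |-> x^q is onto,
   so sigma_L determines the values of L on F; since a q^2-linear polynomial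
   with n coefficients has degree < |F|, sigma_L even determines its
   coefficients.  For a primitive element z, the powers 1, z, ..., z^(n-1) span
   F over F_{q^2}, so a sesquilinear form is determined by its n x n Gram matrix,
   whose entries lie in F_{q^2}.  There are at most q^(2n^2) such matrices and
   exactly q^(2n^2) coefficient vectors of length n, so the injection
   L |-> Gram(sigma_L) is onto.  Next, sigma_L = 0 iff L vanishes on F iff
   X^(q^(2n)) - X divides L.  Finally an alternating sesquilinear form s is
   skew, so for c in F_{q^2} with c^q <> c,
   0 = s(u + c v, u + c v) = (c^q - c) s(u, v). *)

Lemma big_ord_shift_cyclic (R : Type) (idx : R) (op : Monoid.com_law idx)
    m (f : nat -> R) :
  f m = f 0%N -> \big[op/idx]_(i < m) f i.+1 = \big[op/idx]_(i < m) f i.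
Proof.
case: m => [|m] fm0; first by rewrite !big_ord0.
by rewrite big_ord_recr big_ord_recl /= fm0 Monoid.mulmC.
Qed.

Section FinFieldFacts.
Variable F : finFieldType.

Lemma finField_poly_eq0 (P : {poly F}) :
  (size P <= #|F|)%N -> (forall x, P.[x] = 0) -> P = 0.
Proof.
move=> sizeP P0; apply/eqP; apply: contraTT sizeP => nzP.
have rootsP : all (root P) (enum F) by apply/allP => x _; apply/rootP.
by rewrite -ltnNge cardE (max_poly_roots nzP rootsP (enum_uniq F)).
Qed.

Lemma finField_genPoly_dvdP (P : {poly F}) :
  ('X^#|F| - 'X) %| P <-> (forall x, P.[x] = 0).
Proof.
split=> [/dvdpP [Q ->] x | P0].
  by rewrite hornerM !hornerE expf_card subrr mulr0.
have rootsP : all (root P) (index_enum F) by apply/allP => x _; apply/rootP.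
have uniqF : uniq_roots (index_enum F) by rewrite uniq_rootsE index_enum_uniq.
have [Q ->] := uniq_roots_prod_XsubC rootsP uniqF.
by rewrite finField_genPoly dvdp_mull.
Qed.

Lemma expf_card_pred (x : F) : x != 0 -> x ^+ #|F|.-1 = 1.
Proof.
move=> nz_x; apply/(mulfI nz_x).
by rewrite mulr1 -exprS (ltn_predK (finNzRing_gt1 F)) expf_card.
Qed.

Lemma finField_prim_root_exists : exists z : F, (#|F|.-1).-primitive_root z.
Proof.
have N_gt0 : (0 < #|F|.-1)%N by rewrite -subn1 subn_gt0 finNzRing_gt1.
have units1 : all (#|F|.-1).-unity_root (enum (predC1 (0 : F))).
  by apply/allP => x; rewrite mem_enum unity_rootE => /expf_card_pred ->.
have := cyclic.has_prim_root N_gt0 units1 (enum_uniq _).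
rewrite -cardE cardC1 leqnn => /(_ isT) /hasP [z _ prim_z].
by exists z.
Qed.

End FinFieldFacts.

Section SpanOfPowers.
Variables (F : fieldType) (K : {pred F}) (z : F) (m : nat).

Inductive in_span : F -> Prop :=
  | in_span0 : in_span 0
  | in_spanD x y : in_span x -> in_span y -> in_span (x + y)
  | in_spanZ c x : c \in K -> in_span x -> in_span (c * x)
  | in_span_gen i : (i < m)%N -> in_span (z ^+ i).

Variable P : {poly F}.
Hypotheses (K_opp : {in K, forall c, - c \in K}) (P_K : forall i, P`_i \in K)
  (P_monic : P \is monic) (sizeP : size P = m.+1) (rootPz : root P z).

Lemma in_span_exp_deg : in_span (z ^+ m).
Proof.
have lead1 : P`_m = 1 by rewrite -[m]/(m.+1.-1) -sizeP -lead_coefE; exact/monicP.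
have : P.[z] = 0 by apply/rootP.
rewrite horner_coef sizeP big_ord_recr /= lead1 mul1r.
move/eqP; rewrite addrC addr_eq0 => /eqP ->; rewrite -sumrN.
apply: (big_ind in_span) => [|x y|i _]; first exact: in_span0.
  exact: in_spanD.
by rewrite -mulNr; apply: in_spanZ; [exact: K_opp | exact: in_span_gen].
Qed.

Lemma in_span_mulz x : in_span x -> in_span (z * x).
Proof.
elim=> [|x1 x2 _ IH1 _ IH2|c x1 Kc _ IH|i lt_im].
- by rewrite mulr0; exact: in_span0.
- by rewrite mulrDr; exact: in_spanD.
- by rewrite mulrCA; exact: in_spanZ.
- rewrite -exprS; case: (ltngtP i.+1 m) => [lt_i1m | | ->].
  + exact: in_span_gen.
  + by rewrite ltnNge lt_im.
  + exact: in_span_exp_deg.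
Qed.

Lemma in_span_exp i : in_span (z ^+ i).
Proof.
elim: i => [|i IH]; last by rewrite exprS; exact: in_span_mulz.
have [m0 | m_gt0] := posnP m; last exact: in_span_gen.
by have := in_span_exp_deg; rewrite m0.
Qed.

End SpanOfPowers.

Lemma Fq2_1 (F : finFieldType) (q : nat) : (1 : F) \in Fq2 q.
Proof. by rewrite inE /= expr1n. Qed.

Section Sesquilinear.
Variables (F : finFieldType) (q : nat) (s : F -> F -> F).
Hypothesis s_sesq : sesquilinear q s.

Lemma sesqDl x y v : s (x + y) v = s x v + s y v.
Proof. by case: s_sesq => _ sZDl _ _; rewrite -{1}(mul1r x) sZDl ?mul1r ?Fq2_1. Qed.

Lemma sesq0l v : s 0 v = 0.
Proof. by apply: (addIr (s 0 v)); rewrite -sesqDl !add0r. Qed.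

Lemma sesqZl c x v : c \in Fq2 q -> s (c * x) v = c * s x v.
Proof.
by case: s_sesq => _ sZDl _ _ Kc; rewrite -(addr0 (c * x)) sZDl // sesq0l addr0.
Qed.

Lemma sesqDr v x y : s v (x + y) = s v x + s v y.
Proof. by case: s_sesq. Qed.

Lemma sesq0r v : s v 0 = 0.
Proof. by apply: (addIr (s v 0)); rewrite -sesqDr !add0r. Qed.

Lemma sesqZr c v x : c \in Fq2 q -> s v (c * x) = c ^+ q * s v x.
Proof. by case: s_sesq => _ _ _ sZr; apply: sZr. Qed.

Lemma alternating_sesq_eq0 (c : F) : c \in Fq2 q -> c ^+ q != c ->
  alternating s -> forall u v, s u v = 0.
Proof.
move=> Kc cq_neq_c s_alt u v.
have s_skew x y : s x y = - s y x.
  by apply/eqP; rewrite -addr_eq0; have := s_alt (x + y);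
     rewrite sesqDl !sesqDr !s_alt add0r addr0 => ->.
have := s_alt (u + c * v).
rewrite sesqDl !sesqDr !s_alt sesqZr // sesqZl // add0r addr0.
rewrite (s_skew v u) mulrN -mulrBl => /eqP; rewrite mulf_eq0 subr_eq0.
by rewrite (negbTE cq_neq_c) => /eqP.
Qed.

End Sesquilinear.

Lemma sesq_eq_span (F : finFieldType) (q : nat) (s t : F -> F -> F) (z : F) m :
  sesquilinear q s -> sesquilinear q t ->
  (forall i j, (i < m)%N -> (j < m)%N ->
     s (z ^+ i) (z ^+ j) = t (z ^+ i) (z ^+ j)) ->
  forall u v, in_span (Fq2 q) z m u -> in_span (Fq2 q) z m v -> s u v = t u v.
Proof.
move=> s_sesq t_sesq st_gen u v span_u.
elim=> [|v1 v2 _ IH1 _ IH2|c v1 Kc _ IH|j lt_jm].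
- by rewrite (sesq0r s_sesq) (sesq0r t_sesq).
- by rewrite (sesqDr s_sesq) (sesqDr t_sesq) IH1 IH2.
- by rewrite (sesqZr s_sesq) // (sesqZr t_sesq) // IH.
elim: span_u => [|u1 u2 _ IH1 _ IH2|c u1 Kc _ IH|i lt_im].
- by rewrite (sesq0l s_sesq) (sesq0l t_sesq).
- by rewrite (sesqDl s_sesq) (sesqDl t_sesq) IH1 IH2.
- by rewrite (sesqZl s_sesq) // (sesqZl t_sesq) // IH.
- exact: st_gen.
Qed.

Section FiniteField.
Variables (F : finFieldType) (q n : nat).
Hypotheses (qchar : [pchar F].-nat q) (q_gt1 : (1 < q)%N) (n_gt0 : (0 < n)%N)
  (cardF : #|F| = (q ^ (2 * n))%N).

Definition Frobq e (x : F) := x ^+ (q ^ e).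

Lemma exprqD e (x y : F) : (x + y) ^+ (q ^ e) = x ^+ (q ^ e) + y ^+ (q ^ e).
Proof. by apply: exprDn_pchar; rewrite pnatX qchar. Qed.

Lemma Frobq_is_zmod_morphism e : zmod_morphism (Frobq e).
Proof.
by move=> x y; rewrite /Frobq -[in RHS](subrK y x) [in RHS]exprqD addrK.
Qed.

Lemma Frobq_is_monoid_morphism e : monoid_morphism (Frobq e).
Proof. by split=> [|x y]; [exact: expr1n | exact: exprMn]. Qed.

HB.instance Definition _ e :=
  GRing.isZmodMorphism.Build F F (Frobq e) (Frobq_is_zmod_morphism e).
HB.instance Definition _ e :=
  GRing.isMonoidMorphism.Build F F (Frobq e) (Frobq_is_monoid_morphism e).

Lemma exprqB e (x y : F) : (x - y) ^+ (q ^ e) = x ^+ (q ^ e) - y ^+ (q ^ e).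
Proof. exact: (rmorphB (Frobq e)). Qed.

Lemma exprq_sum e I (r : seq I) (P : pred I) (f : I -> F) :
  (\sum_(i <- r | P i) f i) ^+ (q ^ e) = \sum_(i <- r | P i) f i ^+ (q ^ e).
Proof. exact: (rmorph_sum (Frobq e)). Qed.

Lemma exprq_card (x : F) : x ^+ (q ^ (2 * n)) = x.
Proof. by rewrite -cardF expf_card. Qed.

Lemma exprq_onto (v : F) : exists w : F, w ^+ q = v.
Proof.
exists (v ^+ (q ^ (2 * n).-1)).
by rewrite -exprM -expnSr prednK ?muln_gt0 // exprq_card.
Qed.

Lemma Fq2_N (c : F) : c \in Fq2 q -> - c \in Fq2 q.
Proof.
rewrite !inE /= -sub0r exprqB expr0n expn_eq0 (gtn_eqF (ltnW q_gt1)).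
by move=> /eqP ->; rewrite mulr0n.
Qed.

Lemma Fq2_exprq2 (c : F) i : c \in Fq2 q -> c ^+ (q ^ (2 * i)) = c.
Proof.
move=> /eqP cq2; elim: i => [|i IH]; first by rewrite muln0 expn0 expr1.
by rewrite mulnS expnD exprM cq2 IH.
Qed.

Lemma Fq2_exprq (c : F) : c \in Fq2 q -> c ^+ q \in Fq2 q.
Proof. by rewrite !inE /= exprAC => /eqP ->. Qed.

Lemma Tr_is_zmod_morphism : zmod_morphism (Tr q n : F -> F).
Proof.
by move=> x y; rewrite /Tr -sumrB; apply: eq_bigr => i _; rewrite exprqB.
Qed.

HB.instance Definition _ :=
  GRing.isZmodMorphism.Build F F (Tr q n) Tr_is_zmod_morphism.

Lemma TrD (x y : F) : Tr q n (x + y) = Tr q n x + Tr q n y.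
Proof. exact: raddfD. Qed.

Lemma TrB (x y : F) : Tr q n (x - y) = Tr q n x - Tr q n y.
Proof. exact: raddfB. Qed.

Lemma Tr0 : Tr q n 0 = 0 :> F.
Proof. exact: raddf0. Qed.

Lemma TrZ (c x : F) : c \in Fq2 q -> Tr q n (c * x) = c * Tr q n x.
Proof.
move=> Kc; rewrite /Tr mulr_sumr.
by apply: eq_bigr => i _; rewrite exprMn (Fq2_exprq2 _ Kc).
Qed.

Lemma Tr_Fq2 (x : F) : Tr q n x \in Fq2 q.
Proof.
rewrite inE /= /Tr exprq_sum.
rewrite -[X in _ == X](@big_ord_shift_cyclic _ _ _ _ (fun i => x ^+ (q ^ (2 * i)))).
  by apply/eqP/eq_bigr => i _; rewrite -exprM -expnD mulnS addnC.
by rewrite exprq_card muln0 expn0 expr1.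
Qed.

Lemma horner_qlin (a : seq F) x :
  (qlin_poly q a).[x] = \sum_(i < size a) a`_i * x ^+ (q ^ (2 * i)).
Proof. by rewrite horner_sum; apply: eq_bigr => i _; rewrite hornerZ hornerXn. Qed.

Lemma horner_qlinD (a : seq F) x y :
  (qlin_poly q a).[x + y] = (qlin_poly q a).[x] + (qlin_poly q a).[y].
Proof.
by rewrite !horner_qlin -big_split; apply: eq_bigr => i _; rewrite exprqD mulrDr.
Qed.

Lemma horner_qlinZ (a : seq F) c x : c \in Fq2 q ->
  (qlin_poly q a).[c * x] = c * (qlin_poly q a).[x].
Proof.
move=> Kc; rewrite !horner_qlin mulr_sumr; apply: eq_bigr => i _.
by rewrite exprMn (Fq2_exprq2 _ Kc) mulrCA.
Qed.

Lemma size_qlin_poly (a : seq F) :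
  (size (qlin_poly q a) <= (q ^ (2 * (size a).-1)).+1)%N.
Proof.
apply: leq_trans (size_sum _ _ _) _; apply/bigmax_leqP => i _.
apply: leq_trans (size_scale_leq _ _) _.
rewrite size_polyXn ltnS leq_exp2l // leq_mul2l /= -ltnS prednK //.
exact: leq_ltn_trans (leq0n i) (ltn_ord i).
Qed.

Lemma coef_qlin_poly (a : seq F) j : (qlin_poly q a)`_(q ^ (2 * j)) = a`_j.
Proof.
rewrite coef_sum (eq_bigr (fun i : 'I_(size a) => if i == j :> nat then a`_i else 0)).
  rewrite -big_mkcond /= big_ord1_eq.
  by case: ltnP => // le_a_j; rewrite nth_default.
move=> i _; rewrite coefZ coefXn eqn_exp2l // eqn_pmul2l // eq_sym.
by case: eqP; rewrite ?mulr1 ?mulr0.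
Qed.

Lemma qlin_poly_horner_inj (a b : seq F) : (size a <= n)%N -> (size b <= n)%N ->
  (forall x, (qlin_poly q a).[x] = (qlin_poly q b).[x]) -> forall j, a`_j = b`_j.
Proof.
move=> le_a_n le_b_n eq_ab j.
have size_le (c : seq F) : (size c <= n)%N -> (size (qlin_poly q c) <= #|F|)%N.
  move=> le_c_n; apply: leq_trans (size_qlin_poly c) _.
  by rewrite cardF ltn_exp2l // ltn_pmul2l //; case: (size c) le_c_n.
have eqL : qlin_poly q a = qlin_poly q b.
  apply/eqP; rewrite -subr_eq0; apply/eqP/finField_poly_eq0 => [|x].
    by apply: leq_trans (size_polyD _ _) _; rewrite size_polyN geq_max !size_le.
  by rewrite hornerD hornerN eq_ab subrr.
by rewrite -(coef_qlin_poly a) -(coef_qlin_poly b) eqL.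
Qed.

Lemma Tr_qlin (x : F) : Tr q n x = (qlin_poly q (nseq n 1)).[x].
Proof.
rewrite horner_qlin size_nseq /Tr.
by apply: eq_bigr => i _; rewrite nth_nseq ltn_ord mul1r.
Qed.

Lemma Tr_neq0_exists : exists t : F, Tr q n t != 0.
Proof.
apply/existsP; apply: contraT; rewrite negb_exists => /forallP Tr_eq0.
have : (nseq n (1 : F))`_0 = [::]`_0.
  apply: qlin_poly_horner_inj => [||x]; rewrite ?size_nseq //.
  by rewrite -Tr_qlin /qlin_poly big_ord0 horner0; apply/eqP/negPn/Tr_eq0.
by rewrite nth_nseq n_gt0 => /eqP; rewrite oner_eq0.
Qed.

Lemma Tr_mul_inj (y1 y2 : F) :
  (forall u, Tr q n (u * y1) = Tr q n (u * y2)) -> y1 = y2.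
Proof.
move=> eqTr; apply/eqP; rewrite -subr_eq0; apply/negPn/negP => nz_y.
have [t Trt] := Tr_neq0_exists.
have /eqP := eqTr (t / (y1 - y2)).
by rewrite -subr_eq0 -TrB -mulrBr mulfVK // (negbTE Trt).
Qed.

Lemma sigmaL_sesquilinear (a : seq F) : sesquilinear q (sigmaL q n a).
Proof.
split=> [u v | c u u' v Kc | v w w' | c v w Kc]; rewrite /sigmaL.
- exact: Tr_Fq2.
- by rewrite mulrDl TrD -mulrA TrZ.
- by rewrite -[(w + w') ^+ q]/((w + w') ^+ (q ^ 1)) exprqD horner_qlinD mulrDr TrD.
- by rewrite exprMn horner_qlinZ ?Fq2_exprq // mulrCA (TrZ _ (Fq2_exprq Kc)).
Qed.

Lemma sigmaL_horner_eq (a b : seq F) :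
  (forall u v, sigmaL q n a u v = sigmaL q n b u v) ->
  forall x, (qlin_poly q a).[x] = (qlin_poly q b).[x].
Proof.
by move=> eq_ab x; have [w <-] := exprq_onto x; apply: Tr_mul_inj => u; apply: eq_ab.
Qed.

Lemma sigmaL_eq0P (a : seq F) : (forall u v, sigmaL q n a u v = 0) <->
  ('X^(q ^ (2 * n)) - 'X) %| qlin_poly q a.
Proof.
have sigma_nil (u v : F) : sigmaL q n [::] u v = 0.
  by rewrite /sigmaL /qlin_poly big_ord0 horner0 mulr0 Tr0.
rewrite -cardF; split=> [sigma0 | /finField_genPoly_dvdP L0 u v].
  apply/finField_genPoly_dvdP => x.
  have := sigmaL_horner_eq (b := [::]) _ x; rewrite /qlin_poly big_ord0 horner0.
  by apply=> u v; rewrite sigma0 sigma_nil.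
by rewrite /sigmaL L0 mulr0 Tr0.
Qed.

Definition conjugates_poly (z : F) : {poly F} :=
  \prod_(i < n) ('X - (z ^+ (q ^ (2 * i)))%:P).

Lemma conjugates_poly_Fq2 (z : F) i : (conjugates_poly z)`_i \in Fq2 q.
Proof.
(* x |-> x^(q^2) permutes the roots z^(q^(2i)) cyclically, since z^(q^(2n)) = z. *)
have Frob_fixed : map_poly (Frobq 2) (conjugates_poly z) = conjugates_poly z.
  rewrite rmorph_prod.
  rewrite -[RHS](@big_ord_shift_cyclic _ _ _ _
                   (fun i => 'X - (z ^+ (q ^ (2 * i)))%:P)).
    apply: eq_bigr => j _; rewrite /= map_polyXsubC /= /Frobq.
    by rewrite -(exprM z) -expnD mulnS addnC.
  by rewrite exprq_card muln0 expn0 expr1.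
by rewrite inE /= -[_ ^+ _]/(Frobq 2 _) -coef_map Frob_fixed.
Qed.

Lemma prim_root_span (z : F) : (#|F|.-1).-primitive_root z ->
  forall x, in_span (Fq2 q) z n x.
Proof.
move=> prim_z x.
have span_exp i : in_span (Fq2 q) z n (z ^+ i).
  apply: (in_span_exp (P := conjugates_poly z)).
  - exact: Fq2_N.
  - exact: conjugates_poly_Fq2.
  - exact: monic_prod_XsubC.
  - by rewrite size_prod_XsubC [index_enum _]unlock -enumT size_enum_ord.
  - rewrite /root horner_prod (bigD1 (Ordinal n_gt0)) //= hornerXsubC.
    by rewrite muln0 expn0 expr1 subrr mul0r.
have [-> | nz_x] := eqVneq x 0; first exact: in_span0.
by have [i ->] := prim_rootP prim_z (expf_card_pred nz_x).
Qed.

Lemma Fq2_nonfixed_exists : exists2 c : F, c \in Fq2 q & c ^+ q != c.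
Proof.
have [z prim_z] := finField_prim_root_exists F.
have lt_q_q2 : (q < q ^ 2)%N by rewrite -{1}(expn1 q) ltn_exp2l.
have lt1_q2 : (1 < q ^ 2)%N := ltn_trans q_gt1 lt_q_q2.
have q2_dvd : (q ^ 2 - 1 %| #|F|.-1)%N.
  rewrite cardF -subn1 expnM -[X in (_ %| _ - X)%N](exp1n n) subn_exp.
  exact: dvdn_mulr.
have prim_c := dvdn_prim_root prim_z q2_dvd; set c := z ^+ _ in prim_c.
have nz_c : c != 0 by rewrite (prim_root_eq0 prim_c) subn_eq0 -ltnNge.
exists c.
  rewrite inE /= -[(q ^ 2)%N](@subnK 1) 1?ltnW //.
  by rewrite exprD (prim_expr_order prim_c) mul1r.
apply: contraTneq isT => cq.
have : (q ^ 2 - 1 %| q - 1)%N.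
  rewrite (prim_order_dvd prim_c); apply/eqP/(mulfI nz_c).
  by rewrite mulr1 -exprS subn1 prednK ?(ltnW q_gt1).
by move/dvdn_leq; rewrite subn_gt0 q_gt1 leqNgt ltn_sub2r // => /(_ isT).
Qed.

Lemma card_Fq2 : (#|@Fq2 F q| <= q ^ 2)%N.
Proof.
have q2_gt1 : (1 < q ^ 2)%N by rewrite (ltn_trans q_gt1) // -{1}(expn1 q) ltn_exp2l.
have sizeG : size ('X^(q ^ 2) - 'X : {poly F}) = (q ^ 2).+1.
  by rewrite size_polyDl size_polyXn // size_polyN size_polyX ltnS.
have nzG : ('X^(q ^ 2) - 'X : {poly F}) != 0 by rewrite -size_poly_eq0 sizeG.
have rootsG : all (root ('X^(q ^ 2) - 'X)) (enum (@Fq2 F q)).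
  by apply/allP => x; rewrite mem_enum rootE !hornerE subr_eq0.
by have := max_poly_roots nzG rootsG (enum_uniq _); rewrite sizeG -cardE.
Qed.

Definition gram (z : F) (s : F -> F -> F) : {ffun 'I_n * 'I_n -> F} :=
  [ffun ij : 'I_n * 'I_n => s (z ^+ ij.1) (z ^+ ij.2)].

Lemma gram_Fq2 (z : F) (s : F -> F -> F) :
  sesquilinear q s -> gram z s \in ffun_on (Fq2 q).
Proof. by case=> s_Fq2 _ _ _; apply/ffun_onP => ij; rewrite ffunE. Qed.

Lemma sesq_eq_gram (z : F) (s t : F -> F -> F) : (#|F|.-1).-primitive_root z ->
  sesquilinear q s -> sesquilinear q t -> gram z s = gram z t ->
  forall u v, s u v = t u v.
Proof.
move=> prim_z s_sesq t_sesq eq_st u v.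
apply: (sesq_eq_span (z := z) (m := n) s_sesq t_sesq);
  [move=> i j lt_in lt_jn | exact: prim_root_span | exact: prim_root_span].
by have := congr1 (fun g : {ffun _ -> F} => g (Ordinal lt_in, Ordinal lt_jn)) eq_st;
  rewrite !ffunE.
Qed.

Lemma gram_sigmaL_inj (z : F) : (#|F|.-1).-primitive_root z ->
  injective (fun a : n.-tuple F => gram z (sigmaL q n a)).
Proof.
move=> prim_z a b /(sesq_eq_gram prim_z) eq_ab.
apply: eq_from_tnth => i; rewrite !(tnth_nth 0).
apply: qlin_poly_horner_inj; rewrite ?size_tuple //.
by apply: sigmaL_horner_eq; apply: eq_ab; exact: sigmaL_sesquilinear.
Qed.

Lemma sigmaL_onto (s : F -> F -> F) : sesquilinear q s ->
  exists a : seq F, forall u v, s u v = sigmaL q n a u v.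
Proof.
move=> s_sesq; have [z prim_z] := finField_prim_root_exists F.
pose G (a : n.-tuple F) := gram z (sigmaL q n a).
have sub_G : G @: setT \subset ffun_on (Fq2 q).
  by apply/subsetP => _ /imsetP [a _ ->]; exact/gram_Fq2/sigmaL_sesquilinear.
have /subsetP onto_G : ffun_on (Fq2 q) \subset G @: setT.
  rewrite -(geq_leqif (subset_leqif_card sub_G)) card_imset; last first.
    exact: gram_sigmaL_inj.
  rewrite card_ffun_on cardsT card_tuple card_prod !card_ord cardF.
  rewrite -expnM -mulnA (expnM q 2).
  by rewrite leq_exp2r ?muln_gt0 ?n_gt0 // card_Fq2.
have /imsetP [a _ gram_a] := onto_G _ (gram_Fq2 z s_sesq).
by exists a; apply: sesq_eq_gram prim_z s_sesq (sigmaL_sesquilinear a) gram_a.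
Qed.

End FiniteField.

Theorem theorem2p1 (q n : nat) (F : finFieldType) :
  prime_power q -> (0 < n)%N -> #|F| = (q ^ (2 * n))%N ->
  (forall s : F -> F -> F, sesquilinear q s ->
     exists a : seq F, forall u v, s u v = sigmaL q n a u v) /\
  (forall a : seq F,
     (alternating (sigmaL q n a) <-> (forall u v, sigmaL q n a u v = 0)) /\
     ((forall u v, sigmaL q n a u v = 0) <->
        ('X^(q ^ (2 * n)) - 'X) %| qlin_poly q a)).
Proof.
move=> [p [k [p_prime k_gt0 ->]]] n_gt0 cardF.
have pF : p \in [pchar F] by apply: card_finPcharP p_prime; rewrite cardF -expnM.
have qchar : [pchar F].-nat (p ^ k)%N by rewrite (eq_pnat _ (pcharf_eq pF)) pnatX pnat_id.
have q_gt1 : (1 < p ^ k)%N by rewrite -(expn0 p) ltn_exp2l // prime_gt1.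
split=> [s | a]; first exact: sigmaL_onto.
split; last exact: sigmaL_eq0P.
split=> [alt_a | sigma0 v]; last exact: sigma0.
have [c Kc c_nonfixed] := Fq2_nonfixed_exists q_gt1 cardF.
exact: (alternating_sesq_eq0 (sigmaL_sesquilinear qchar cardF a) Kc c_nonfixed).
Qed.
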